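(* Let $M$ be a finite message set, let $\Sigma$ be an ambiguous experiment with message set $M$, and let $\tau: M \to \Delta(A)$ be a receiver strategy with $\tau \in BR(\Sigma)$. For each $\sigma \in \Sigma$ define the canonical experiment $\sigma^{*}: \Omega \to \Delta(A)$ by $\sigma^{*}(a\mid\omega) = \sum_{m \in M} \sigma(m\mid\omega)\tau(a\mid m)$, and let $\Sigma^{*} = \{\sigma^{*} : \sigma \in \Sigma\}$. Then $\Sigma^{*}$ is a canonical ambiguous experiment (a nonempty closed convex set of canonical experiments), it is obedient, i.e. $\tau^{*} \in BR(\Sigma^{*})$, and $u_i(\sigma, \tau) = u_i(\sigma^{*}, \tau^{*})$ for all $i \in \{s, r\}$ and all $\sigma \in \Sigma$.
   Context: Setting: $\Omega$ is a finite set of states, $A$ a finite set of receiver actions. Sender and receiver share a set of priors $P \subseteq \Delta(\Omega)$, nonempty, closed and convex; both have maxmin expected utility preferences. Payoffs are $u_s, u_r : A \times \Omega \to \mathbb{R}$. A statistical experiment with finite message set $M$ is a map $\sigma: \Omega \to \Delta(M)$, written $\sigma(m\mid\omega)$. A receiver strategy is $\tau: M \to \Delta(A)$, written $\tau(a\mid m)$. For $p \in P$ and $i \in \{s,r\}$, $u_i(p,\sigma,\tau) = \sum_{\omega,m,a} p(\omega)\sigma(m\mid\omega)\tau(a\mid m)u_i(a,\omega)$ and $u_i(\sigma,\tau) = \min_{p\in P} u_i(p,\sigma,\tau)$. An ambiguous experiment is a nonempty closed convex set $\Sigma$ of statistical experiments with a common finite message set $M$; $U_i(\Sigma,\tau)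 = \min_{\sigma \in \Sigma} u_i(\sigma,\tau)$. Best responses: $BR(\sigma) = \arg\max_{\tau} u_r(\sigma,\tau)$ and $BR(\Sigma) = \arg\max_{\tau} U_r(\Sigma,\tau)$, maximizing over all strategies $\tau: M \to \Delta(A)$. An experiment is canonical if its message set is $M = A$. The obedient strategy $\tau^{*}: A \to \Delta(A)$ is $\tau^{*}(a\mid a) = 1$ for all $a \in A$. A canonical (ambiguous) experiment is obedient if $\tau^{*}$ is a best response to it. *)

From mathcomp Require Import all_boot all_order all_algebra.
From mathcomp Require Import all_classical all_reals all_analysis.
Set Implicit Arguments. Unset Strict Implicit. Unset Printing Implicit Defensive.
Import Order.TTheory GRing.Theory Num.Theory.
Import numFieldNormedType.Exports.
Local Open Scope classical_set_scope.
Local Open Scope ring_scope.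

Section Persuasion.
Variables (R : realType) (Omega A : finType).

Definition is_dist (X : finType) (p : X -> R) : Prop :=
  (forall x, 0 <= p x) /\ \sum_(x : X) p x = 1.

(* Topologies: pointwise (= product = Euclidean, the domains being finite). *)
Definition ptws_space (X : finType) := {ptws X -> R}.
Definition ptws_space2 (X Y : finType) := {ptws X -> ptws_space Y}.

Definition prior_set (P : set (Omega -> R)) : Prop :=
  P !=set0 /\ @closed (ptws_space Omega) P /\
  @convex_set R (Omega -> R) P /\ P `<=` (@is_dist Omega).

Definition is_experiment (M : finType) (s : Omega -> M -> R) : Prop :=
  forall w, is_dist (s w).

Definition is_strategy (M : finType) (t : M -> A -> R) : Prop :=
  forall m, is_dist (t m).

Definition ambiguous_experiment (M : finType) (S : set (Omega -> M -> R)) : Prop :=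
  S !=set0 /\ @closed (ptws_space2 Omega M) S /\
  @convex_set R (Omega -> M -> R) S /\ S `<=` (@is_experiment M).

Definition eu (M : finType) (u : A -> Omega -> R) (p : Omega -> R)
    (s : Omega -> M -> R) (t : M -> A -> R) : R :=
  \sum_(w : Omega) \sum_(m : M) \sum_(a : A) p w * s w m * t m a * u a w.

(* u_i(sigma, tau) = min_{p in P} u_i(p, sigma, tau)  (min = inf, attained) *)
Definition uP (M : finType) (P : set (Omega -> R)) (u : A -> Omega -> R)
    (s : Omega -> M -> R) (t : M -> A -> R) : R :=
  inf [set eu u p s t | p in P].

Definition USig (M : finType) (P : set (Omega -> R)) (S : set (Omega -> M -> R))
    (u : A -> Omega -> R) (t : M -> A -> R) : R :=
  inf [set uP P u s t | s in S].

Definition best_response (M : finType) (P : set (Omega -> R))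
    (S : set (Omega -> M -> R)) (ur : A -> Omega -> R) (t : M -> A -> R) : Prop :=
  is_strategy t /\
  forall t' : M -> A -> R, is_strategy t' -> USig P S ur t' <= USig P S ur t.

Definition canonical_exp (M : finType) (s : Omega -> M -> R) (t : M -> A -> R)
    : Omega -> A -> R :=
  fun w a => \sum_(m : M) s w m * t m a.

Definition obedient : A -> A -> R := fun a b => if a == b then 1 else 0.

End Persuasion.

From mathcomp Require Import all_boot all_order all_algebra.
From mathcomp Require Import all_classical all_reals all_analysis.
Import Order.TTheory GRing.Theory Num.Theory.
Import numFieldNormedType.Exports.
Local Open Scope classical_set_scope.
Local Open Scope ring_scope.

(* Garbling each sigma in Sigma by tau is composition of Markov kernels, which
   is associative with the obedient strategy as right unit.  Hence
   u_i(sigma^*, t') = u_i(sigma, tau;t') for every strategy t' on A, where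
   tau;t' is again a strategy on M: taking t' = tau^* gives the payoff identity,
   and optimality of tau against Sigma gives obedience against Sigma^*.
   Sigma^* is convex because garbling is linear in sigma, and closed because it
   is the continuous image of the compact set Sigma. *)

Lemma cvg_prod_topology (I : eqType) (K : I -> topologicalType)
  (F : set_system (prod_topology K)) (f : prod_topology K) :
  Filter F -> (forall i, (fun g : prod_topology K => g i) @ F --> f i) -> F --> f.
Proof.
move=> FF Fi; apply/cvg_sup => i.
have proj_surj : (fun g : prod_topology K => g i) @` setT = setT.
  rewrite predeqE => y; split => // _.
  by exists (dfwith f i y) => //; rewrite dfwithin.
apply/cvg_image => // B /Fi /= FB.
by exists ((fun g : prod_topology K => g i) @^-1` B); rewrite ?image_preimage.
Qed.

Lemma continuous_prod_topology (T : topologicalType) (I : eqType)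
  (K : I -> topologicalType) (f : T -> prod_topology K) :
  (forall i, continuous (fun x => f x i)) -> continuous f.
Proof. by move=> fi x; apply: cvg_prod_topology => // i; exact: fi. Qed.

Lemma convex_set_linear_image (R : numDomainType) (E F : lmodType R)
  (f : E -> F) (S : set E) :
  linear f -> @convex_set R E S -> @convex_set R F (f @` S).
Proof.
move=> fL cS _ _ l /set_mem[x Sx <-] /set_mem[y Sy <-]; apply/mem_set.
exists (@conv R (convex_lmodType E) l x y); first by apply/set_mem/cS; exact/mem_set.
have f0 : f 0 = 0.
  have := fL 1 0 0; rewrite !scale1r addr0.
  by move=> /esym/eqP; rewrite -subr_eq0 addrK => /eqP.
have fZ a z : f (a *: z) = a *: f z by rewrite -[a *: z]addr0 fL f0 addr0.
change (f (l%:num *: x + (1 - l%:num) *: y) = l%:num *: f x + (1 - l%:num) *: f y).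
by rewrite fL fZ.
Qed.

Section Garbling.
Context {R : realType}.

(* [canonical_exp f g] is the composition of Markov kernels [f : X -> Delta(Y)]
   and [g : Y -> Delta(Z)] for arbitrary finite X, Y, Z; it also composes
   strategies [tau : M -> Delta(A)] and [t' : A -> Delta(A)]. *)

Lemma canonical_expA {W X Y Z : finType} (f : W -> X -> R) (g : X -> Y -> R)
    (h : Y -> Z -> R) :
  canonical_exp (canonical_exp f g) h = canonical_exp f (canonical_exp g h).
Proof.
apply/funext => w; apply/funext => z; rewrite /canonical_exp.
under eq_bigr do rewrite mulr_suml.
rewrite exchange_big /=; apply: eq_bigr => x _.
by rewrite mulr_sumr; apply: eq_bigr => y _; rewrite mulrA.
Qed.

Lemma canonical_exp_obedient {X Y : finType} (f : X -> Y -> R) :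
  canonical_exp f (@obedient R Y) = f.
Proof.
apply/funext => x; apply/funext => y; rewrite /canonical_exp /obedient.
rewrite (bigD1 y) //= eqxx mulr1 big1 ?addr0 // => y' /negbTE ->.
by rewrite mulr0.
Qed.

Lemma is_experiment_canonical_exp {X Y Z : finType} (f : X -> Y -> R)
    (g : Y -> Z -> R) :
  is_experiment f -> is_experiment g -> is_experiment (canonical_exp f g).
Proof.
move=> hf hg x; split.
  by move=> z; apply: sumr_ge0 => y _; apply: mulr_ge0; [exact: (hf x).1|exact: (hg y).1].
rewrite /canonical_exp exchange_big /=.
under eq_bigr do rewrite -mulr_sumr (hg _).2 mulr1.
exact: (hf x).2.
Qed.

Lemma is_experiment_obedient (X : finType) : is_experiment (@obedient R X).
Proof.
move=> x; split; first by move=> y; rewrite /obedient; case: ifP.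
rewrite (bigD1 x) //= /obedient eqxx big1 ?addr0 // => y.
by rewrite eq_sym => /negbTE ->.
Qed.

Lemma linear_canonical_exp {X Y Z : finType} (g : Y -> Z -> R) :
  linear (fun f : X -> Y -> R => canonical_exp f g).
Proof.
move=> a f f'; apply/funext => x; apply/funext => z.
change (\sum_y (a * f x y + f' x y) * g y z =
        a * \sum_y f x y * g y z + \sum_y f' x y * g y z).
rewrite mulr_sumr -big_split /=; apply: eq_bigr => y _.
by rewrite mulrDl mulrA.
Qed.

Lemma continuous_canonical_exp {X Y Z : finType} (g : Y -> Z -> R) :
  continuous (fun f : ptws_space2 R X Y => canonical_exp f g : ptws_space2 R X Z).
Proof.
apply: continuous_prod_topology => x; apply: continuous_prod_topology => z.
apply: (continuous_big (op := +%R)) => [|y _ f]; first exact: add_continuous.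
apply: (continuousM (s := fun f : ptws_space2 R X Y => f x y)); last exact: cst_continuous.
have proj_x : continuous (fun f : ptws_space2 R X Y => f x) by exact: proj_continuous.
have proj_y : continuous (fun h : ptws_space R Y => h y) by exact: proj_continuous.
exact: continuous_comp (proj_x f) (proj_y (f x)).
Qed.

Lemma compact_experiments {X Y : finType} (S : set (X -> Y -> R)) :
  @closed (ptws_space2 R X Y) S -> S `<=` @is_experiment R X Y ->
  @compact (ptws_space2 R X Y) S.
Proof.
move=> clS hS; apply: (subclosed_compact clS).
  exact: tychonoff (fun x => tychonoff (fun y => @segment_compact R 0 1)).
move=> f Sf x y /=; have [f_ge0 f_sum1] := hS f Sf x.
by rewrite in_itv /= f_ge0 /= -f_sum1 (bigD1 y) //= lerDl sumr_ge0.
Qed.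

Lemma closed_canonical_exp_image {X Y Z : finType} (S : set (X -> Y -> R))
    (g : Y -> Z -> R) :
  @closed (ptws_space2 R X Y) S -> S `<=` @is_experiment R X Y ->
  @closed (ptws_space2 R X Z) [set canonical_exp f g | f in S].
Proof.
move=> clS hS.
have := continuous_compact (continuous_subspaceT (@continuous_canonical_exp X Y Z g))
  (compact_experiments _ clS hS).
apply: compact_closed.
by apply: hausdorff_product => x; apply: hausdorff_product => z; exact: Rhausdorff.
Qed.

End Garbling.

Section Payoffs.
Variables (R : realType) (Omega A M : finType) (P : set (Omega -> R))
  (u : A -> Omega -> R).

Lemma euE {N : finType} (p : Omega -> R) (s : Omega -> N -> R) (t : N -> A -> R) :
  eu u p s t = \sum_w \sum_a p w * canonical_exp s t w a * u a w.
Proof.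
rewrite /eu /canonical_exp; apply: eq_bigr => w _.
rewrite exchange_big /=; apply: eq_bigr => a _.
by rewrite mulr_sumr mulr_suml; apply: eq_bigr => m _; rewrite !mulrA.
Qed.

Lemma uP_canonical_exp (s : Omega -> M -> R) (t : M -> A -> R) (t' : A -> A -> R) :
  uP P u (canonical_exp s t) t' = uP P u s (canonical_exp t t').
Proof.
by congr inf; apply: eq_imagel => p _; rewrite !euE canonical_expA.
Qed.

Lemma USig_canonical_exp_image (S : set (Omega -> M -> R)) (t : M -> A -> R)
    (t' : A -> A -> R) :
  USig P [set canonical_exp s t | s in S] u t' = USig P S u (canonical_exp t t').
Proof.
by rewrite /USig image_comp; congr inf; apply: eq_imagel => s _; exact: uP_canonical_exp.
Qed.

End Payoffs.

Theorem lemma1 (R : realType) (Omega A M : finType) (P : set (Omega -> R))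
    (us ur : A -> Omega -> R) (Sigma : set (Omega -> M -> R)) (tau : M -> A -> R) :
  prior_set P ->
  ambiguous_experiment Sigma ->
  best_response P Sigma ur tau ->
  let Sigma_star := [set canonical_exp s tau | s in Sigma] in
  ambiguous_experiment Sigma_star /\
  best_response P Sigma_star ur (@obedient R A) /\
  (forall s, Sigma s ->
     uP P us s tau = uP P us (canonical_exp s tau) (@obedient R A) /\
     uP P ur s tau = uP P ur (canonical_exp s tau) (@obedient R A)).
Proof.
move=> _ [Sigma_ne [Sigma_closed [Sigma_convex Sigma_exp]]] [tau_strat tau_br].
split; [|split; [split|]].
- split; first exact: image_nonempty.
  split; first exact: closed_canonical_exp_image.
  split; first exact: convex_set_linear_image (linear_canonical_exp _) Sigma_convex.
  by move=> _ [s Ss <-]; apply: is_experiment_canonical_exp => //; exact: Sigma_exp.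
- exact: is_experiment_obedient.
- move=> t' t'_strat; rewrite !USig_canonical_exp_image canonical_exp_obedient.
  by apply: tau_br; exact: is_experiment_canonical_exp.
- by move=> s _; rewrite !uP_canonical_exp !canonical_exp_obedient.
Qed.
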